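(* Let $\nu_n,\nu\in\Delta(V)$ with $\nu_n\to\nu$ weakly. Then $\pi^*(c,\nu)\le\liminf_{n\to\infty}\pi^*(c,\nu_n)$.
   Context: $V\subset\mathbb{R}$ is compact and $c:V\to\mathbb{R}$ is continuous with $v-c(v)\ge0$ on $V$. $\Delta(V)$ denotes Borel probability measures on $V$. For $\nu\in\Delta(V)$ and $p\in V$, $\pi(c,\nu,p)=\int_{\{v\ge p\}}(p-c(v))\nu(dv)$ and $\pi^*(c,\nu)=\max_{p\in V}\pi(c,\nu,p)$. *)

From HB Require Import structures.
From mathcomp Require Import all_boot all_order all_algebra.
From mathcomp Require Import all_classical all_reals all_analysis.
Set Implicit Arguments. Unset Strict Implicit. Unset Printing Implicit Defensive.
Import Order.TTheory GRing.Theory Num.Theory numFieldNormedType.Exports.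
Local Open Scope classical_set_scope.
Local Open Scope ring_scope.

(* A Borel probability measure on V (a subset of R) is represented as a
   probability measure on the Borel sets of R which is concentrated on V. *)
Definition supported_on (R : realType) (V : set R)
  (nu : probability R R) : Prop := nu (~` V) = 0%E.

Definition weak_cvg (R : realType) (V : set R)
  (nus : nat -> probability R R) (nu : probability R R) : Prop :=
  forall f : R -> R, {within V, continuous f} ->
    (exists M : R, forall x, V x -> `|f x| <= M) ->
    (fun n => Rintegral (nus n) V f) @ \oo --> Rintegral nu V f.

Definition profit (R : realType) (V : set R) (c : R -> R)
  (nu : probability R R) (p : R) : R :=
  Rintegral nu (V `&` [set v | p <= v]) (fun v => p - c v).

Definition opt_profit (R : realType) (V : set R) (c : R -> R)
  (nu : probability R R) : R :=
  sup [set profit V c nu p | p in V].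

From HB Require Import structures.
From mathcomp Require Import all_boot all_order all_algebra.
From mathcomp Require Import all_classical all_reals all_analysis.
From mathcomp Require Import measurable_realfun lra.
Import Order.TTheory GRing.Theory Num.Theory numFieldNormedType.Exports.
Local Open Scope classical_set_scope.
Local Open Scope ring_scope.

(* The payoff v |-> (p - c v) 1_{v >= p} is only upper semicontinuous, so
   pi(c, ., p) need not pass to weak limits. Lowering the price to the least
   point q of V in [p - e, +oo[ repairs this: with the continuous ramp f from
   0 at p - e to 1 at p, the test function f (q - c) satisfies
   pi(c, mu, p) <= int f (q - c) dmu + e and int f (q - c) dmu <= pi(c, mu, q) + e
   for every probability mu, because v - c v >= 0 forces q - c v >= -e at the
   prices v of V in [q, p[. Weak convergence then gives
   pi(c, nu, p) - 3e <= pi*(c, nu_n) for all large n. *)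

Lemma bounded_within_compact {R : realType} {V : set R} {g : R -> R} :
  compact V -> {within V, continuous g} -> exists M, forall v, V v -> `|g v| <= M.
Proof.
move=> cV gc; have /compact_bounded [M [_ HM]] := continuous_compact gc cV.
exists (`|M| + 1) => v Vv; apply: (HM (`|M| + 1)); last by exists v.
by rewrite (le_lt_trans (ler_norm M)) // ltrDl.
Qed.

Lemma integrable_within_compact {R : realType} {V D : set R} {g : R -> R}
    (mu : {finite_measure set R -> \bar R}) :
  compact V -> {within V, continuous g} -> D `<=` V -> measurable D ->
  mu.-integrable D (EFin \o g).
Proof.
move=> cV gc DV mD; have mV := compact_measurable cV.
have [M gM] := bounded_within_compact cV gc.
apply: measurable_bounded_integrable => //.
- by rewrite ltey_eq fin_num_measure.
- exact: measurable_funS (subspace_continuous_measurable_fun mV gc).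
- exists M; split; first by rewrite num_real.
  by move=> x Mx y Dy; rewrite /= (le_trans (gM _ (DV _ Dy))) // ltW.
Qed.

Lemma compact_min_ge {R : realType} {V : set R} {a p : R} :
  compact V -> V p -> a <= p ->
  exists2 q, V q /\ a <= q & forall v, V v -> a <= v -> q <= v.
Proof.
move=> cV Vp ap.
have cVa : compact (V `&` [set v | a <= v]) by apply: compact_closedI => //; exact: closed_ge.
have [|q /set_mem Vaq qmin] := compact_EVT_min _ cVa (continuous_subspaceT (fun _ => cvg_id)).
  by exists p.
by exists q => // v Vv av; apply: qmin; rewrite inE.
Qed.

Lemma fine_probability_le1 {R : realType} (mu : probability R R) {D : set R} :
  measurable D -> fine (mu D) <= 1.
Proof.
move=> mD; have mu1 := probability_le1 mu mD.
have muD : mu D \is a fin_num by rewrite ge0_fin_numE // (le_lt_trans mu1) ?ltry.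
by rewrite -lee_fin fineK.
Qed.

Lemma le_Rintegral_add_cst {R : realType} (mu : probability R R) {D : set R}
    {g h : R -> R} {e : R} :
  measurable D -> mu.-integrable D (EFin \o g) -> mu.-integrable D (EFin \o h) ->
  0 <= e -> (forall x, D x -> g x <= h x + e) ->
  Rintegral mu D g <= Rintegral mu D h + e.
Proof.
move=> mD ig ih e0 ghe.
have ie : mu.-integrable D (EFin \o cst e) by exact: finite_measure_integrable_cst.
have ihe : mu.-integrable D (EFin \o (fun x => h x + e)).
  by rewrite (_ : _ \o _ = (EFin \o h) \+ (EFin \o cst e)) ?funeqE//; exact: integrableD.
apply: le_trans (le_Rintegral mD ig ihe ghe) _.
rewrite RintegralD // lerD2l Rintegral_cst //.
by rewrite ler_piMr // fine_probability_le1.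
Qed.

Definition ramp {R : realType} (a d v : R) : R := Num.min 1 (Num.max 0 ((v - a) / d)).

Section Ramp.
Context {R : realType}.
Variables (a d : R).
Hypothesis d_gt0 : 0 < d.

Lemma ramp_ge0 v : 0 <= ramp a d v.
Proof. by rewrite /ramp le_min ler01 le_max lexx. Qed.

Lemma ramp_le1 v : ramp a d v <= 1.
Proof. by rewrite /ramp ge_min lexx. Qed.

Lemma ramp_eq0 v : v <= a -> ramp a d v = 0.
Proof.
move=> va; have : (v - a) / d <= 0 by rewrite pmulr_lle0 ?invr_gt0 // subr_le0.
by move=> ?; rewrite /ramp max_l // min_r ?ler01.
Qed.

Lemma ramp_eq1 v : a + d <= v -> ramp a d v = 1.
Proof.
move=> adv; have : 1 <= (v - a) / d by rewrite ler_pdivlMr // mul1r lerBrDl.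
by move=> d1; rewrite /ramp max_r ?(le_trans ler01) // min_l.
Qed.

Lemma continuous_ramp : continuous (ramp a d).
Proof.
move=> x.
have lin : {for x, continuous (fun v : R => (v - a) / d)}.
  by apply: cvgM; [apply: cvgB; [exact: cvg_id | exact: cvg_cst] | exact: cvg_cst].
exact: continuous_min (cvg_cst _) (continuous_max (cvg_cst _) lin).
Qed.

End Ramp.

Section Profit.
Variables (R : realType) (V : set R) (c : R -> R).
Hypotheses (cV : compact V) (cc : {within V, continuous c}).
Hypothesis margin : forall v, V v -> 0 <= v - c v.

Let mV : measurable V := compact_measurable cV.

Let measurable_ge (p : R) : measurable [set v : R | p <= v].
Proof. by apply: closed_measurable; exact: closed_ge. Qed.

Let continuous_subc (q : R) : {within V, continuous (fun v => q - c v)}.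
Proof. by move=> x; apply: cvgB; [exact: cvg_cst | exact: cc]. Qed.

Let payoff (p : R) : R -> R := (fun v => p - c v) \_ [set v | p <= v].

Let payoff_ge (p x : R) : p <= x -> payoff p x = p - c x.
Proof. by move=> px; rewrite /payoff patchE mem_set. Qed.

Let payoff_lt (p x : R) : x < p -> payoff p x = 0.
Proof. by move=> xp; rewrite /payoff patchE memNset //= leNgt xp. Qed.

Let profitE (mu : probability R R) (p : R) :
  profit V c mu p = Rintegral mu V (payoff p).
Proof. exact: Rintegral_mkcondr. Qed.

Let integrable_payoff (mu : probability R R) (p : R) :
  mu.-integrable V (EFin \o payoff p).
Proof.
rewrite -restrict_EFin -integrable_restrict //.
apply: integrable_within_compact mu cV (continuous_subc p) (@subIsetl _ _ _) _.
exact: measurableI.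
Qed.

Lemma has_ubound_profit (mu : probability R R) :
  has_ubound [set profit V c mu p | p in V].
Proof.
have [M1 M1V] := bounded_within_compact cV (continuous_subspaceT (fun _ => cvg_id)).
have [M2 M2c] := bounded_within_compact cV cc.
exists (M1 + M2) => _ [p Vp <-].
have M0 : 0 <= M1 + M2.
  by rewrite addr_ge0 // (le_trans _ (M1V _ Vp), le_trans _ (M2c _ Vp)).
have payoff_le x : V x -> payoff p x <= cst 0 x + (M1 + M2).
  move=> Vx; rewrite add0r; have [px|xp] := leP p x; last by rewrite payoff_lt.
  rewrite payoff_ge //; have := M1V _ Vp; have := M2c _ Vx.
  by rewrite !ler_norml => /andP[? ?] /andP[? ?]; lra.
rewrite profitE; apply: le_trans (le_Rintegral_add_cst mu mV _ _ M0 payoff_le) _ => //.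
  exact: finite_measure_integrable_cst.
by rewrite Rintegral_cst // mul0r add0r.
Qed.

Lemma profit_le_opt_profit (mu : probability R R) {p : R} :
  V p -> profit V c mu p <= opt_profit V c mu.
Proof.
move=> Vp; apply: sup_upper_bound; last by exists p.
by split; [exists (profit V c mu p), p | exact: has_ubound_profit].
Qed.

Section RampTest.
Variables (p e q : R).
Hypotheses (e_gt0 : 0 < e) (q_ge : p - e <= q).
Hypothesis q_min : forall v, V v -> p - e <= v -> q <= v.

Let f (v : R) : R := ramp (p - e) e v * (q - c v).

Lemma continuous_ramp_test : {within V, continuous f}.
Proof.
move=> x; apply: cvgM; last exact: continuous_subc.
exact: (continuous_subspaceT (continuous_ramp (p - e) e)).
Qed.

Let f_eq0 x : V x -> x < q -> f x = 0.
Proof.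
move=> Vx xq; rewrite /f ramp_eq0 ?mul0r //.
by rewrite leNgt; apply: contraTN xq => /ltW /(q_min _ Vx); rewrite -leNgt.
Qed.

Let subc_ge {x} : V x -> q <= x -> x < p -> - e <= q - c x.
Proof. by move=> Vx qx xp; have := margin _ Vx; move: q_ge xp; lra. Qed.

Let f_ge {x} : V x -> q <= x -> x < p -> - e <= f x.
Proof.
move=> Vx qx xp; have := subc_ge Vx qx xp.
have := ramp_ge0 (p - e) e x; have := ramp_le1 (p - e) e x; move: e_gt0; rewrite /f; nra.
Qed.

Let payoff_le_f x : V x -> payoff p x <= f x + e.
Proof.
move=> Vx; have [px|xp] := leP p x.
  by rewrite payoff_ge // /f ramp_eq1 ?subrK // mul1r; move: q_ge; lra.
rewrite payoff_lt //; have [xq|qx] := ltP x q; last by have := f_ge Vx qx xp; lra.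
by rewrite f_eq0 // add0r ltW.
Qed.

Let f_le_payoff x : V x -> f x <= payoff q x + e.
Proof.
move=> Vx; have [xq|qx] := ltP x q.
  by rewrite f_eq0 // payoff_lt // add0r ltW.
rewrite payoff_ge //; have [px|xp] := leP p x.
  by rewrite /f ramp_eq1 ?subrK // mul1r lerDl ltW.
have := subc_ge Vx qx xp; have := ramp_ge0 (p - e) e x; have := ramp_le1 (p - e) e x.
move: e_gt0; rewrite /f; nra.
Qed.

Lemma profit_le_Rintegral_ramp (mu : probability R R) :
  profit V c mu p <= Rintegral mu V f + e.
Proof.
have intf := integrable_within_compact mu cV continuous_ramp_test (@subset_refl _ V) mV.
rewrite profitE; exact: (le_Rintegral_add_cst mu mV (integrable_payoff mu p) intf (ltW e_gt0) payoff_le_f).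
Qed.

Lemma Rintegral_ramp_le_profit (mu : probability R R) :
  Rintegral mu V f <= profit V c mu q + e.
Proof.
have intf := integrable_within_compact mu cV continuous_ramp_test (@subset_refl _ V) mV.
rewrite profitE; exact: (le_Rintegral_add_cst mu mV intf (integrable_payoff mu q) (ltW e_gt0) f_le_payoff).
Qed.

End RampTest.

Lemma profit_le_opt_profit_near (nus : nat -> probability R R) (nu : probability R R)
    (p e : R) :
  weak_cvg V nus nu -> V p -> 0 < e ->
  \forall n \near \oo, profit V c nu p - e <= opt_profit V c (nus n).
Proof.
move=> nus_nu Vp e_gt0; set d := e / 3.
have d_gt0 : 0 < d by rewrite divr_gt0.
have pd_le : p - d <= p by rewrite gerBl ltW.
have [q [Vq q_ge] q_min] := compact_min_ge cV Vp pd_le.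
have ramp_cont := continuous_ramp_test p d q.
have [M fM] := bounded_within_compact cV ramp_cont.
have := nus_nu _ ramp_cont (ex_intro _ M fM).
move=> /cvgr_gt /(_ (Rintegral nu V (fun v => ramp (p - d) d v * (q - c v)) - d)).
rewrite gtrBl => /(_ d_gt0).
apply: filterS => n nu_lt_nus.
have := profit_le_Rintegral_ramp _ _ _ d_gt0 q_ge q_min nu.
have := Rintegral_ramp_le_profit _ _ _ d_gt0 q_ge q_min (nus n).
have := profit_le_opt_profit (nus n) Vq.
move: nu_lt_nus; rewrite /d; lra.
Qed.

End Profit.

Lemma limn_einf_ge_near {R : realType} (u : (\bar R)^nat) (x : \bar R) :
  (\forall n \near \oo, (x <= u n)%E) -> (x <= limn_einf u)%E.
Proof.
move=> [N _ xu]; rewrite limn_einf_lim; apply: lime_ge; first exact: is_cvg_einfs.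
exists N => // m /= Nm; apply: le_ereal_inf_tmp => _ [k /= mk <-].
exact/xu/(leq_trans Nm mk).
Qed.

Lemma sup_le_limn_einf {R : realType} (S : set R) (u : R^nat) :
  has_sup S -> (forall s, S s -> forall e, 0 < e -> \forall n \near \oo, s - e <= u n) ->
  ((sup S)%:E <= limn_einf (fun n => (u n)%:E))%E.
Proof.
move=> supS Su; apply/lee_subgt0Pr => e e_gt0.
have [s Ss sup_lt] := sup_adherent e_gt0 supS.
apply: (@le_trans _ _ s%:E); first by rewrite -EFinB lee_fin ltW.
apply/lee_subgt0Pr => e' e'_gt0; apply: limn_einf_ge_near.
by apply: filterS (Su s Ss e' e'_gt0) => n; rewrite -EFinB lee_fin.
Qed.

Lemma supported_on_nonempty {R : realType} {V : set R} {nu : probability R R} :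
  supported_on V nu -> V !=set0.
Proof.
rewrite -set0P /supported_on => nuV; apply/eqP => V0.
by move: nuV; rewrite V0 setC0 probability_setT => /eqP; rewrite onee_eq0.
Qed.

Theorem lemmaI4 (R : realType) (V : set R) (c : R -> R)
  (nus : nat -> probability R R) (nu : probability R R) :
  compact V ->
  {within V, continuous c} ->
  (forall v, V v -> 0 <= v - c v) ->
  (forall n, supported_on V (nus n)) ->
  supported_on V nu ->
  weak_cvg V nus nu ->
  ((opt_profit V c nu)%:E <= limn_einf (fun n => (opt_profit V c (nus n))%:E))%E.
Proof.
move=> cV cc margin _ nuV nus_nu.
have [v Vv] := supported_on_nonempty nuV.
apply: sup_le_limn_einf => [|_ [p Vp <-] e e_gt0].
  by split; [exists (profit V c nu v), v | exact: has_ubound_profit].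
exact: profit_le_opt_profit_near.
Qed.
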